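(* Let $q\ge 2$, $r\ge 2$ and $t,s\ge 0$ be integers. Then $$\max_{\substack{\mathbf{x}_1,\mathbf{x}_2\in J_r^*\\ \mathbf{x}_1\neq \mathbf{x}_2}} \bigl|\mathcal{B}_{t,s}(\mathbf{x}_1)\cap \mathcal{B}_{t,s}(\mathbf{x}_2)\bigr| \;+\;1 \;=\; M,\qquad\text{where}\quad M=\sum_{i=1}^{t} A_{t-i,s}(r-1)+\sum_{i=1}^{s} A_{t,s-i}(r-1)+1 .$$ Equivalently, $M$ is the minimum number $N$ such that any $N$ distinct sequences lying in $\mathcal{B}_{t,s}(\mathbf{x})$ for some $\mathbf{x}\in J_r^*$ determine $\mathbf{x}$ uniquely, i.e. $M$ is the minimum number of distinct outputs of the $(t,s)$-sticky-insdel channel required to uniquely reconstruct the transmitted sequence.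
   Context: Let $\Sigma_q=\{0,1,\dots,q-1\}$ and $\Sigma_q^*$ the set of finite strings over $\Sigma_q$. Every $\mathbf{x}\in\Sigma_q^*$ can be written uniquely as $\mathbf{x}=c_1^{u_1}c_2^{u_2}\cdots c_r^{u_r}$ with $c_i\neq c_{i+1}$ and $u_i\ge 1$ (runs); $r$ is the number of runs and $J_r^*$ is the set of strings with exactly $r$ runs. Write $\Psi(\mathbf{x})=(\mathbf{c},\mathbf{u})$ with $\mathbf{c}=c_1\cdots c_r$, $\mathbf{u}=(u_1,\dots,u_r)\in\mathbb{Z}_+^r$; $\Psi$ is a bijection from $J_r^*$ onto pairs of such $\mathbf{c}$ and $\mathbf{u}\in\mathbb{Z}_+^r$. A sticky insertion duplicates a symbol within its run (increases one run length by one); a sticky deletion deletes a symbol from a run of length at least 2. The sticky-insdel ball $\mathcal{B}_{t,s}(\mathbf{x})$ is the set of sequences obtainable from $\mathbf{x}$ by at most $t$ sticky insertions and at most $s$ sticky deletions; equivalently, if $\Psi(\mathbf{x})=(\mathbf{c},\mathbf{u})$, then $\mathbf{y}\in\mathcal{B}_{t,s}(\mathbf{x})$ iff $\Psi(\mathbf{y})=(\mathbf{c},\mathbf{v})$ with $\mathbf{v}\in\mathbb{Z}_+^r$, $\sum_{i=1}^r\max\{0,u_i-v_i\}\le s$ and $\sum_{i=1}^r\max\{0,v_i-u_i\}\le t$. The numbers $A_{t,s}(r)$ (for integers $t,s$ and $r\ge1$) are defined by: $A_{t,s}(r)=0$ if $t<0$ or $s<0$; $A_{t,s}(1)=t+s+1$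 for $t,s\ge0$; and for $r\ge 2$, $t,s\ge 0$: $A_{t,s}(r)=\sum_{i=1}^{t}A_{t-i,s}(r-1)+\sum_{i=1}^{s}A_{t,s-i}(r-1)+A_{t,s}(r-1)$. *)

From mathcomp Require Import all_boot.
Set Implicit Arguments. Unset Strict Implicit. Unset Printing Implicit Defensive.

Fixpoint runs_aux {T : eqType} (c : T) (n : nat) (s : seq T) : seq (T * nat) :=
  match s with
  | [::] => [:: (c, n)]
  | a :: s' => if a == c then runs_aux c n.+1 s' else (c, n) :: runs_aux a 1 s'
  end.

Definition runs {T : eqType} (x : seq T) : seq (T * nat) :=
  if x is a :: x' then runs_aux a 1 x' else [::].

Definition in_J {T : eqType} (r : nat) (x : seq T) : bool := size (runs x) == r.

(* Sticky-insdel ball B_{t,s}(x), via the run-length characterization: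
   y in B_{t,s}(x) iff Psi(y) = (c, v) where Psi(x) = (c, u) and
   sum max(0,u_i-v_i) <= s, sum max(0,v_i-u_i) <= t.
   (nat subtraction is truncated, so u - v = max(0, u - v).) *)
Definition in_ball {T : eqType} (t s : nat) (x y : seq T) : bool :=
  let u := unzip2 (runs x) in
  let v := unzip2 (runs y) in
  [&& unzip1 (runs y) == unzip1 (runs x),
      sumn [seq p.1 - p.2 | p <- zip u v] <= s &
      sumn [seq p.2 - p.1 | p <- zip u v] <= t].

(* A0 r' t s = A_{t,s}(r'+1) for t, s >= 0 *)
Fixpoint A0 (r' : nat) (t s : nat) : nat :=
  match r' with
  | 0 => t + s + 1
  | r''.+1 => \sum_(1 <= i < t.+1) A0 r'' (t - i) s
              + \sum_(1 <= i < s.+1) A0 r'' t (s - i) + A0 r'' t s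
  end.

(* A_{t,s}(r) for r >= 1 (value at r = 0 is irrelevant) *)
Definition A (t s r : nat) : nat := if r is r'.+1 then A0 r' t s else 0.

(* |{y | P y}| <= n  (for an arbitrary, a priori possibly infinite, predicate) *)
Definition card_le {T : eqType} (P : pred T) (n : nat) : Prop :=
  forall l : seq T, uniq l -> all P l -> size l <= n.

Definition card_eq {T : eqType} (P : pred T) (n : nat) : Prop :=
  exists l : seq T, [/\ uniq l, size l = n & forall y, P y <-> y \in l].

Definition Mval (t s r : nat) : nat :=
  \sum_(1 <= i < t.+1) A (t - i) s r.-1 + \sum_(1 <= i < s.+1) A t (s - i) r.-1 + 1.

From mathcomp Require Import all_boot all_order all_algebra zify.
Set Implicit Arguments. Unset Strict Implicit. Unset Printing Implicit Defensive.
Import Order.TTheory GRing.Theory Num.Theory.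

(* A string y lies in B_{t,s}(x) iff it has the run colours of x and its run
   lengths are those of x plus a vector of the set
   D(n) = {w in Z^n | sum_i max(w_i, 0) <= t, sum_i max(-w_i, 0) <= s},
   and |D(n)| = A_{t,s}(n).  For x1 <> x2 with run lengths u1 <> u2 the
   intersection of the balls therefore embeds into D(r) /\ (D(r) + d), where
   d = u2 - u1 <> 0.  Pick j with d_j <> 0.  Every w' in D(r-1), padded with a
   0 at position j, starts a ray w - k d (k >= 0) that eventually leaves D(r);
   its last point in D(r) lies in D(r) \ (D(r) + d), and distinct w' give
   distinct points because the j-th coordinate recovers k.  Hence the
   intersection has at most A(r) - A(r-1) = M - 1 elements.  Equality holds
   for run lengths u1 = (s+1, ..., s+1) and u2 = u1 + e_1: such runs survive s
   deletions, and w in D(r) \ (D(r) + e_1) forces w_1 = -(s - sum_{i>1}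
   max(-w_i, 0)), so D(r) \ (D(r) + e_1) is in bijection with D(r-1). *)

Section RunLengthEncoding.
Variable T : eqType.

Definition unruns (rs : seq (T * nat)) : seq T := flatten [seq nseq p.2 p.1 | p <- rs].

Lemma unruns_runs_aux (c : T) n x : unruns (runs_aux c n x) = nseq n c ++ x.
Proof.
elim: x c n => [|a x IHx] c n /=; first by rewrite /unruns /= !cats0.
case: eqP => [->|_]; last by rewrite /unruns /= -/(unruns _) IHx.
by rewrite IHx -addn1 nseqD -catA.
Qed.

Lemma runsK : cancel (@runs T) unruns.
Proof. by case=> // a x; rewrite /runs unruns_runs_aux. Qed.

Lemma runs_inj : injective (@runs T).
Proof. exact: can_inj runsK. Qed.

Lemma runs_aux_nseq (a : T) n k x : runs_aux a n (nseq k a ++ x) = runs_aux a (n + k) x.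
Proof. by elim: k n => [|k IHk] n /=; rewrite ?addn0 // eqxx IHk addSnnS. Qed.

Lemma runs_aux_head (a : T) n x : ohead x != Some a -> runs_aux a n x = (a, n) :: runs x.
Proof. by case: x => //= b x; rewrite [Some b == _]/eq_op /= => /negbTE->. Qed.

Lemma unrunsK (rs : seq (T * nat)) :
  sorted (fun p q => p.1 != q.1) rs -> all (fun p => 0 < p.2) rs -> runs (unruns rs) = rs.
Proof.
elim: rs => [|[a m] rs IHrs] //= srt /andP[m_gt0 pos_rs].
case: m m_gt0 srt => // m _ srt.
rewrite /unruns /= -/(unruns rs) /runs /= runs_aux_nseq add1n runs_aux_head.
  by rewrite IHrs ?(path_sorted srt).
case: rs srt pos_rs {IHrs} => [|[b [|k]] rs] //= /andP[ab _] _.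
by rewrite [Some b == _]/eq_op /= eq_sym.
Qed.

End RunLengthEncoding.

Definition zpos (z : int) : nat := absz (Num.max z 0%R).
Definition zneg (z : int) : nat := zpos (- z).

Definition admissible (t s : nat) (w : seq int) : bool :=
  (sumn (map zpos w) <= t) && (sumn (map zneg w) <= s).

Lemma admissible_cons t s z w : admissible t s (z :: w) =
  [&& zpos z <= t, zneg z <= s & admissible (t - zpos z) (s - zneg z) w].
Proof.
rewrite /admissible /=; apply/andP/and3P => [[? ?]|[? ? /andP[? ?]]].
  by split; [lia | lia | apply/andP; split; lia].
by split; lia.
Qed.

Lemma mem_leq_sumn (l : seq nat) x : x \in l -> x <= sumn l.
Proof. by elim: l => //= y l IHl; rewrite inE => /orP[/eqP->|/IHl]; lia. Qed.

Lemma admissible_mem t s w z : admissible t s w -> z \in w -> zpos z <= t /\ zneg z <= s.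
Proof.
case/andP=> pos_w neg_w zw; split.
  by apply: leq_trans pos_w; apply/mem_leq_sumn/map_f.
by apply: leq_trans neg_w; apply/mem_leq_sumn/map_f.
Qed.

Lemma admissible_zneg t s w : admissible t s w -> all (fun z => zneg z <= s) w.
Proof. by move=> adm; apply/allP=> z /(admissible_mem adm) []. Qed.

Lemma zpos_nat n : zpos (Posz n) = n. Proof. rewrite /zpos; lia. Qed.
Lemma zneg_nat n : zneg (Posz n) = 0. Proof. rewrite /zneg /zpos; lia. Qed.
Lemma zpos_oppnat n : zpos (- Posz n) = 0. Proof. rewrite /zpos; lia. Qed.
Lemma zneg_oppnat n : zneg (- Posz n) = n. Proof. rewrite /zneg /zpos; lia. Qed.

(* The order 1..t, -1..-s, 0 follows the three terms of the recurrence of [A0]. *)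
Definition zrange (t s : nat) : seq int :=
  [seq Posz i | i <- iota 1 t] ++ [seq (- Posz i)%R | i <- iota 1 s] ++ [:: 0%R].

Lemma mem_zrange t s z : (z \in zrange t s) = (zpos z <= t) && (zneg z <= s).
Proof.
rewrite /zneg /zpos !mem_cat inE; apply/idP/idP.
  by case/or3P=> [/mapP[i + ->]|/mapP[i + ->]|/eqP->]; rewrite ?mem_iota; lia.
case: z => [[|i]|i] bnd; rewrite ?eqxx ?orbT //.
  by apply/orP; left; apply/mapP; exists i.+1; rewrite ?mem_iota; lia.
by apply/orP; right; apply/orP; left; apply/mapP; exists i.+1; rewrite ?mem_iota ?NegzE; lia.
Qed.

Lemma zrange_uniq t s : uniq (zrange t s).
Proof.
rewrite /zrange !cat_uniq !map_inj_uniq ?iota_uniq //=; last 2 first.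
- by move=> i j /eqP; rewrite eqr_opp => /eqP[].
- by move=> i j [].
rewrite !orbF !andbT; apply/andP; split.
  apply/hasPn=> x; rewrite mem_cat inE => /orP[/mapP[i _ ->]|/eqP->];
  by apply/negP=> /mapP[j]; rewrite !mem_iota; lia.
by apply/negP=> /mapP[i]; rewrite mem_iota; lia.
Qed.

Fixpoint enumD (n t s : nat) : seq (seq int) :=
  if n is n'.+1 then
    [seq z :: w | z <- zrange t s, w <- enumD n' (t - zpos z) (s - zneg z)]
  else [:: [::]].

Lemma enumDS n t s :
  enumD n.+1 t s = [seq z :: w | z <- zrange t s, w <- enumD n (t - zpos z) (s - zneg z)].
Proof. by []. Qed.

Lemma mem_enumD n t s w : (w \in enumD n t s) = (size w == n) && admissible t s w.
Proof.
elim: n t s w => [|n IHn] t s [|z w] //=.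
  by apply/allpairsPdep=> -[? [? []]].
rewrite eqSS admissible_cons [(zpos z <= t) && _]andbA -mem_zrange andbCA -IHn.
apply/allpairsPdep/andP => [[z' [w' [? ? [-> ->]]]] //|[? ?]].
by exists z, w.
Qed.

Lemma enumD_uniq n t s : uniq (enumD n t s).
Proof.
elim: n t s => [|n IHn] t s //=.
apply: allpairs_uniq_dep => [|z _|[z w] [z' w'] _ _ /= [-> ->]] //.
exact: zrange_uniq.
Qed.

Lemma size_enumD n t s : size (enumD n.+1 t s) = A0 n t s.
Proof.
elim: n t s => [|n IHn] t s; rewrite enumDS size_allpairs_dep.
  have sumn_size1 (l : seq int) :
      sumn [seq size (enumD 0 (t - zpos z) (s - zneg z)) | z <- l] = size l.
    by elim: l => //= z l ->.
  by rewrite sumn_size1 /zrange !size_cat !size_map !size_iota /= addnA.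
rewrite (@eq_map _ _ _ (fun z => A0 n (t - zpos z) (s - zneg z))) => [|z]; last exact: IHn.
rewrite /zrange !map_cat !sumn_cat /= addn0 addnA /index_iota !subSS !subn0 !sumnE !big_map.
congr (_ + _ + _); apply: eq_bigr => i _.
  by rewrite zpos_nat zneg_nat subn0.
by rewrite zpos_oppnat zneg_oppnat subn0.
Qed.

Definition shift (d : seq int) (k : nat) (w : seq int) : seq int :=
  [seq (p.1 - p.2 *+ k)%R | p : int * int <- zip w d].

Section Shift.
Variables (d w : seq int).
Hypothesis size_w : size w = size d.

Lemma size_shift k : size (shift d k w) = size d.
Proof. by rewrite size_map size_zip size_w minnn. Qed.

Lemma nth_shift k i : nth 0%R (shift d k w) i = (nth 0%R w i - nth 0%R d i *+ k)%R.
Proof.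
have [i_lt|i_ge] := ltnP i (size d).
  by rewrite (nth_map (0%R, 0%R)) ?nth_zip ?size_zip ?size_w ?minnn.
by rewrite !nth_default ?size_shift ?size_w // mul0rn subr0.
Qed.

Lemma shift0 : shift d 0 w = w.
Proof. by apply: (@eq_from_nth _ 0%R) => [|i _]; rewrite ?size_shift ?nth_shift ?subr0. Qed.

End Shift.

Lemma shift1_shift d k w : size w = size d -> shift d 1 (shift d k w) = shift d k.+1 w.
Proof.
move=> size_w; have size_kw := size_shift size_w k.
apply: (@eq_from_nth _ 0%R) => [|i _]; first by rewrite !size_shift.
by rewrite !nth_shift // mulr1n mulrSr opprD addrA.
Qed.

Lemma shift_inj d k w w' : size w = size d -> size w' = size d ->
  shift d k w = shift d k w' -> w = w'.
Proof.
move=> size_w size_w' eq_shift.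
apply: (@eq_from_nth _ 0%R) => [|i _]; first by rewrite size_w size_w'.
by apply: (addIr (- (nth 0%R d i *+ k))%R); rewrite -!nth_shift // eq_shift.
Qed.

Definition ins0 (j : nat) (w : seq int) : seq int := take j w ++ 0%R :: drop j w.

Lemma size_ins0 j w : size (ins0 j w) = (size w).+1.
Proof. by rewrite /ins0 size_cat /= size_take size_drop addnS; case: ltnP => ?; lia. Qed.

Lemma nth_ins0 j w : j <= size w -> nth 0%R (ins0 j w) j = 0%R.
Proof. by move=> j_le; rewrite /ins0 nth_cat size_takel // ltnn subnn. Qed.

Lemma admissible_ins0 t s j w : admissible t s (ins0 j w) = admissible t s w.
Proof.
rewrite /admissible /ins0 !map_cat !sumn_cat /=.
by rewrite -[in RHS](cat_take_drop j w) !map_cat !sumn_cat.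
Qed.

Lemma ins0_inj j w w' : j <= size w -> j <= size w' -> ins0 j w = ins0 j w' -> w = w'.
Proof.
move=> j_le j_le' /eqP; rewrite /ins0 eqseq_cat ?size_takel // => /andP[/eqP eq_take /eqP[eq_drop]].
by rewrite -(cat_take_drop j w) -(cat_take_drop j w') eq_take eq_drop.
Qed.

Section MaximalShift.
Variables (n t s : nat) (d : seq int).
Hypotheses (size_d : size d = n.+1) (d_neq0 : has (fun z => z != 0%R) d).

Let j := find (fun z => z != 0%R) d.
Let j_lt : j < size d. Proof. by rewrite -has_find. Qed.
Let dj_neq0 : nth 0%R d j != 0%R. Proof. exact: (nth_find 0%R d_neq0). Qed.

Lemma admissible_shift_bound w k : size w = size d -> nth 0%R w j = 0%R ->
  admissible t s (shift d k w) -> k <= t + s.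
Proof.
move=> size_w wj0 adm.
have /(admissible_mem adm) : nth 0%R (shift d k w) j \in shift d k w.
  by rewrite mem_nth ?size_shift.
rewrite nth_shift // wj0 sub0r /zneg /zpos -mulr_natr.
by move: dj_neq0; nia.
Qed.

Definition max_shift (w : seq int) : nat :=
  find (fun k => ~~ admissible t s (shift d k.+1 w)) (iota 0 (t + s).+1).

Lemma max_shiftP w : size w = size d -> nth 0%R w j = 0%R -> admissible t s w ->
  admissible t s (shift d (max_shift w) w) && ~~ admissible t s (shift d (max_shift w).+1 w).
Proof.
move=> size_w wj0 adm_w; rewrite /max_shift.
set P := fun k => ~~ admissible t s (shift d k.+1 w).
have has_P : has P (iota 0 (t + s).+1).
  apply/hasP; exists (t + s); first by rewrite mem_iota add0n ltnSn.
  by apply/negP=> /(admissible_shift_bound size_w wj0); lia.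
have max_lt : find P (iota 0 (t + s).+1) < (t + s).+1.
  by rewrite -[X in _ < X](size_iota 0) -has_find.
apply/andP; split; last by have := nth_find 0 has_P; rewrite nth_iota.
case max_eq: (find P _) max_lt => [|k] k_lt; first by rewrite shift0.
have := @before_find _ 0 P (iota 0 (t + s).+1) k.
by rewrite max_eq ltnSn nth_iota ?add0n 1?ltnW // => /(_ isT) /negbFE.
Qed.

Definition boundary_lift (w : seq int) : seq int := shift d (max_shift (ins0 j w)) (ins0 j w).

Lemma boundary_lift_mem w : w \in enumD n t s ->
  boundary_lift w \in [seq v <- enumD n.+1 t s | ~~ admissible t s (shift d 1 v)].
Proof.
rewrite mem_enumD => /andP[/eqP size_w adm_w].
have j_le : j <= size w by rewrite size_w -ltnS -size_d.
have size_w0 : size (ins0 j w) = size d by rewrite size_ins0 size_w size_d.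
have adm_w0 : admissible t s (ins0 j w) by rewrite admissible_ins0.
have /andP[adm_max not_adm] := max_shiftP size_w0 (nth_ins0 j_le) adm_w0.
rewrite mem_filter mem_enumD /boundary_lift shift1_shift // not_adm.
by rewrite size_shift // size_d eqxx adm_max.
Qed.

Lemma boundary_lift_inj : {in enumD n t s &, injective boundary_lift}.
Proof.
move=> w w'; rewrite !mem_enumD => /andP[/eqP size_w _] /andP[/eqP size_w' _] eq_lift.
have j_le : j <= size w by rewrite size_w -ltnS -size_d.
have j_le' : j <= size w' by rewrite size_w' -ltnS -size_d.
have size_w0 : size (ins0 j w) = size d by rewrite size_ins0 size_w size_d.
have size_w0' : size (ins0 j w') = size d by rewrite size_ins0 size_w' size_d.
have := congr1 (fun v => nth 0%R v j) eq_lift.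
rewrite /= /boundary_lift !nth_shift // !nth_ins0 // !sub0r => /oppr_inj /(mulrIn dj_neq0) eq_top.
move: eq_lift; rewrite /boundary_lift eq_top => /(shift_inj size_w0 size_w0').
exact: ins0_inj.
Qed.

Lemma count_admissible_shift_le :
  count (fun w => admissible t s (shift d 1 w)) (enumD n.+1 t s) + size (enumD n t s)
  <= size (enumD n.+1 t s).
Proof.
rewrite -[leqRHS](count_predC (fun w => admissible t s (shift d 1 w))) leq_add2l -size_filter.
rewrite -(size_map boundary_lift); apply: uniq_leq_size => [|_ /mapP[w w_in ->]].
  by rewrite map_inj_in_uniq ?enumD_uniq //; exact: boundary_lift_inj.
exact: boundary_lift_mem.
Qed.

End MaximalShift.

Lemma admissible_tail t s z w : admissible t s (z :: w) -> admissible t s w.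
Proof. rewrite /admissible /=; lia. Qed.

Lemma shift_nseq0 k w : shift (nseq (size w) 0%R) k w = w.
Proof.
apply: (@eq_from_nth _ 0%R) => [|i _]; first by rewrite size_shift size_nseq.
by rewrite nth_shift ?size_nseq // nth_nseq if_same mul0rn subr0.
Qed.

Lemma admissible_pred_head t s z w :
  admissible t s (z :: w) -> ~~ admissible t s ((z - 1)%R :: w) ->
  z = (- Posz (s - sumn (map zneg w)))%R.
Proof. rewrite /admissible /= /zneg /zpos; lia. Qed.

Lemma count_admissible_shift_e1 n t s :
  count (fun w => admissible t s (shift (1%R :: nseq n 0%R) 1 w)) (enumD n.+1 t s)
  + size (enumD n t s) = size (enumD n.+1 t s).
Proof.
set P := fun w => admissible t s (shift (1%R :: nseq n 0%R) 1 w).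
have size_e : size (1%R :: nseq n 0%R : seq int) = n.+1 := congr1 S (size_nseq n 0%R).
have e_neq0 : has (fun z => z != 0%R) (1%R :: nseq n 0%R : seq int) by [].
apply/eqP; rewrite eqn_leq (count_admissible_shift_le t s size_e e_neq0).
rewrite -[leqLHS](count_predC P) leq_add2l -size_filter -(size_map behead).
have shift_cons z w : size w = n -> P (z :: w) = admissible t s ((z - 1)%R :: w).
  by move=> size_w; rewrite /P /shift /= -/(shift _ 1 w) -size_w shift_nseq0 mulr1n.
apply: uniq_leq_size => [|_ /mapP[[|z w] + ->]]; rewrite ?mem_filter ?mem_enumD //.
  rewrite map_inj_in_uniq ?filter_uniq ?enumD_uniq // => -[|z w] [|z' w'];
    rewrite !mem_filter !mem_enumD //= => /and3P[+ /eqP[size_w] adm] /and3P[+ _ adm'] eq_w.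
  subst w'; rewrite !shift_cons // => not_adm not_adm'.
  by rewrite (admissible_pred_head adm not_adm) (admissible_pred_head adm' not_adm').
by rewrite /= eqSS => /and3P[_ -> /admissible_tail].
Qed.

Definition zdiff (v u : seq nat) : seq int := [seq (Posz p.1 - Posz p.2)%R | p <- zip v u].

Lemma size_zdiff v u : size v = size u -> size (zdiff v u) = size u.
Proof. by move=> size_v; rewrite size_map size_zip size_v minnn. Qed.

Lemma map_zpos_zdiff v u : map zpos (zdiff v u) = [seq p.2 - p.1 | p <- zip u v].
Proof. by elim: v u => [|a v IHv] [|b u] //=; rewrite IHv /zpos; congr cons; lia. Qed.

Lemma map_zneg_zdiff v u : map zneg (zdiff v u) = [seq p.1 - p.2 | p <- zip u v].
Proof. by elim: v u => [|a v IHv] [|b u] //=; rewrite IHv /zneg /zpos; congr cons; lia. Qed.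

Lemma in_ballE (T : eqType) t s (x y : seq T) : in_ball t s x y =
  (unzip1 (runs y) == unzip1 (runs x))
  && admissible t s (zdiff (unzip2 (runs y)) (unzip2 (runs x))).
Proof. by rewrite /in_ball /admissible map_zpos_zdiff map_zneg_zdiff [(_ <= s) && _]andbC. Qed.

Lemma zdiff_inj u v v' : size v = size u -> size v' = size u ->
  zdiff v u = zdiff v' u -> v = v'.
Proof.
elim: u v v' => [|b u IHu] [|a v] [|a' v'] //= [size_v] [size_v'] [eq_a /IHu-> //].
by congr cons; lia.
Qed.

Lemma has_zdiff_neq0 u v : size v = size u -> v != u -> has (fun z => z != 0%R) (zdiff v u).
Proof.
elim: u v => [|b u IHu] [|a v] //= [size_v]; rewrite eqseq_cons negb_and.
case/orP=> [a_neq_b|/IHu-> //]; last by rewrite orbT.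
by apply/orP; left; move: a_neq_b; lia.
Qed.

Lemma shift_zdiff v u u' : size v = size u -> size u' = size u ->
  shift (zdiff u' u) 1 (zdiff v u) = zdiff v u'.
Proof.
elim: u v u' => [|b u IHu] [|a v] [|b' u'] //= [size_v] [size_u'].
by rewrite /shift /= -/(shift _ 1 _) IHu // mulr1n opprB addrA subrK.
Qed.

Lemma card_le_ball_meet (T : eqType) n t s (x1 x2 : seq T) :
  size (runs x1) = n.+1 -> size (runs x2) = n.+1 -> x1 <> x2 ->
  card_le [pred y | in_ball t s x1 y && in_ball t s x2 y]
    (size (enumD n.+1 t s) - size (enumD n t s)).
Proof.
move=> size1 size2 x12 [|y0 L] uniqL allL //.
set u1 := unzip2 (runs x1); set u2 := unzip2 (runs x2).
have size_u1 : size u1 = n.+1 by rewrite size_map.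
have size_u2 : size u2 = n.+1 by rewrite size_map.
have meet y : y \in y0 :: L -> [/\ unzip1 (runs y) = unzip1 (runs x1),
    unzip1 (runs y) = unzip1 (runs x2), size (unzip2 (runs y)) = n.+1,
    admissible t s (zdiff (unzip2 (runs y)) u1)
  & admissible t s (zdiff (unzip2 (runs y)) u2)].
  move=> /(allP allL); rewrite /= !in_ballE => /andP[/andP[/eqP c1 adm1] /andP[/eqP c2 adm2]].
  by split=> //; rewrite size_map -size1; move/(congr1 size): c1; rewrite !size_map.
have u12 : u2 != u1.
  apply/eqP=> eq_u; apply: x12; apply: runs_inj.
  have [c1 c2 _ _ _] := meet y0 (mem_head _ _).
  by rewrite -(zip_unzip (runs x1)) -(zip_unzip (runs x2)) -c1 -c2 -/u1 -/u2 eq_u.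
have size_d : size (zdiff u2 u1) = n.+1 by rewrite size_zdiff // size_u1.
have d_neq0 := has_zdiff_neq0 (etrans size_u2 (esym size_u1)) u12.
have := count_admissible_shift_le t s size_d d_neq0.
suff : size (y0 :: L)
    <= count (fun w => admissible t s (shift (zdiff u2 u1) 1 w)) (enumD n.+1 t s).
  by lia.
rewrite -size_filter -(size_map (fun y => zdiff (unzip2 (runs y)) u1)).
apply: uniq_leq_size => [|_ /mapP[y /meet[_ _ size_v adm1 adm2] ->]].
  rewrite map_inj_in_uniq // => y y' /meet[c1 _ size_v _ _] /meet[c1' _ size_v' _ _].
  move/zdiff_inj => eq_v; apply: runs_inj.
  by rewrite -(zip_unzip (runs y)) -(zip_unzip (runs y')) c1 c1' eq_v // ?size_v ?size_v'.
rewrite mem_filter mem_enumD size_zdiff ?size_v ?size_u1 // eqxx adm1.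
by rewrite shift_zdiff ?size_v ?size_u1 ?size_u2 ?adm2.
Qed.

Lemma card_eq_of_le (T : eqType) (P : pred T) n l :
  card_le P n -> uniq l -> all P l -> size l = n -> card_eq P n.
Proof.
move=> le_n uniq_l all_l size_l; exists l; split=> // y; split=> [Py|/(allP all_l)//].
apply/negPn/negP=> yNl; have := le_n (y :: l); rewrite /= yNl uniq_l Py all_l size_l.
by move=> /(_ isT isT); rewrite ltnn.
Qed.

Section AlternatingWitness.
Variables (T : eqType) (a b : T) (n s : nat).
Hypothesis a_neq_b : a != b.

Let swap (c : T) : T := if c == a then b else a.

Let colors : seq T := traject swap a n.+1.

(* Run lengths s + 1 + w_i stay positive for every admissible w, so each
   admissible change is realised; the two centres are [witness 0] and
   [witness e_1]. *)
Let lengths (w : seq int) : seq nat := [seq absz (Posz s.+1 + z)%R | z <- w].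

Let witness (w : seq int) : seq T := unruns (zip colors (lengths w)).

Let size_colors : size colors = n.+1. Proof. exact: size_traject. Qed.

Let colors_alternate : sorted (fun c c' => c != c') colors.
Proof.
have : fpath swap a (traject swap (swap a) n) by apply/fpathP; exists n.
apply: sub_path => c c' /eqP <-; rewrite /swap.
by case: (c =P a) => [->|/eqP]; rewrite ?eqxx.
Qed.

Let zdiff_lengths w w' : size w' = size w ->
  all (fun z => zneg z <= s) w -> all (fun z => zneg z <= s) w' ->
  zdiff (lengths w') (lengths w) = shift w 1 w'.
Proof.
elim: w' w => [|z' w' IHw] [|z w] //= [size_w] /andP[low_z low_w] /andP[low_z' low_w'].
rewrite /shift /= -/(shift _ 1 _) -IHw // mulr1n; congr cons.
by rewrite /zneg /zpos /= in low_z low_z' *; lia.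
Qed.

Let runs_witness w : size w = n.+1 -> all (fun z => zneg z <= s) w ->
  runs (witness w) = zip colors (lengths w).
Proof.
move=> size_w low_w; have size_l : size (lengths w) = n.+1 by rewrite size_map.
apply: unrunsK.
  rewrite -[sorted _ _]/(sorted (relpre fst (fun c c' => c != c')) _) -sorted_map.
  by rewrite -/(unzip1 _) unzip1_zip ?size_colors ?size_l.
rewrite -[all _ _]/(all (preim snd (fun m => 0 < m)) _) -all_map -/(unzip2 _).
rewrite unzip2_zip ?size_colors ?size_l // all_map.
by apply: sub_all low_w => z; rewrite /zneg /zpos /preim /=; lia.
Qed.

Let in_ball_witness t w w' :
  size w = n.+1 -> all (fun z => zneg z <= s) w ->
  size w' = n.+1 -> all (fun z => zneg z <= s) w' ->
  in_ball t s (witness w) (witness w') = admissible t s (shift w 1 w').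
Proof.
move=> size_w low_w size_w' low_w'.
have size_l v : size (lengths v) = size v by rewrite size_map.
rewrite in_ballE !runs_witness // !unzip1_zip ?unzip2_zip ?size_l ?size_w ?size_w' ?size_colors //.
by rewrite eqxx zdiff_lengths // size_w size_w'.
Qed.

Let witness_inj w w' :
  size w = n.+1 -> all (fun z => zneg z <= s) w ->
  size w' = n.+1 -> all (fun z => zneg z <= s) w' ->
  witness w = witness w' -> w = w'.
Proof.
move=> size_w low_w size_w' low_w' /(congr1 (@runs T)).
rewrite !runs_witness // => /(congr1 unzip2).
rewrite !unzip2_zip ?size_map ?size_w ?size_w' ?size_colors // => eq_l.
have := zdiff_lengths (etrans size_w (esym size_w')) low_w' low_w.
rewrite eq_l zdiff_lengths // => /esym /shift_inj -> //.
by rewrite size_w.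
Qed.

Lemma exists_card_eq_ball_meet t :
  exists x1 x2 : seq T, [/\ size (runs x1) = n.+1, size (runs x2) = n.+1, x1 <> x2 &
    card_eq [pred y | in_ball t s x1 y && in_ball t s x2 y]
      (size (enumD n.+1 t s) - size (enumD n t s))].
Proof.
pose e := (1%R :: nseq n 0%R) : seq int.
have [size0 size_e] : size (nseq n.+1 0%R : seq int) = n.+1 /\ size e = n.+1.
  by rewrite /= !size_nseq.
have [low0 low_e] : all (fun z => zneg z <= s) (nseq n.+1 0%R) /\ all (fun z => zneg z <= s) e.
  by rewrite /= !all_nseq /zneg /zpos /= leq0n !orbT.
have size_runs w : size w = n.+1 -> all (fun z => zneg z <= s) w -> size (runs (witness w)) = n.+1.
  by move=> size_w low_w; rewrite runs_witness // size_zip size_colors size_map size_w minnn.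
have x12 : witness (nseq n.+1 0%R) <> witness e.
  by move/witness_inj=> /(_ size0 low0 size_e low_e) [].
have meet_le :=
  @card_le_ball_meet _ _ t s _ _ (size_runs _ size0 low0) (size_runs _ size_e low_e) x12.
exists (witness (nseq n.+1 0%R)), (witness e); split; rewrite ?size_runs //.
have D_low w : w \in enumD n.+1 t s -> size w = n.+1 /\ all (fun z => zneg z <= s) w.
  by rewrite mem_enumD => /andP[/eqP ? /admissible_zneg].
apply: (card_eq_of_le meet_le
  (l := [seq witness w | w <- enumD n.+1 t s & admissible t s (shift e 1 w)])).
- rewrite map_inj_in_uniq ?filter_uniq ?enumD_uniq // => w w'.
  rewrite !mem_filter => /andP[_ /D_low[? ?]] /andP[_ /D_low[? ?]].
  exact: witness_inj.
- apply/allP=> y /mapP[w]; rewrite mem_filter => /andP[adm_e w_in ->].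
  have [size_w low_w] := D_low w w_in; rewrite /= !in_ball_witness // adm_e andbT.
  rewrite -[_ :: _]/(nseq n.+1 0%R) -size_w shift_nseq0.
  by move: w_in; rewrite mem_enumD => /andP[].
- by rewrite size_map size_filter -(count_admissible_shift_e1 n t s) addnK.
Qed.

End AlternatingWitness.

Lemma Mval_pred t s n : (Mval t s n.+2).-1 = A0 n.+1 t s - A0 n t s.
Proof. by rewrite /Mval addn1 /= addnK. Qed.

Theorem theorem1 (q r t s : nat) (hq : 2 <= q) (hr : 2 <= r) :
  let M := Mval t s r in
  (exists x1 x2 : seq 'I_q, [/\ in_J r x1, in_J r x2, x1 <> x2 &
      card_eq [pred y | in_ball t s x1 y && in_ball t s x2 y] M.-1]) /\
  (forall x1 x2 : seq 'I_q, in_J r x1 -> in_J r x2 -> x1 <> x2 ->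
      card_le [pred y | in_ball t s x1 y && in_ball t s x2 y] M.-1).
Proof.
case: r hr => [|[|n]] // _ M; rewrite /M Mval_pred -!size_enumD; split.
  have a_neq_b : Ordinal (ltnW hq) != Ordinal hq by [].
  have [x1 [x2 [size1 size2 x12 meet]]] := exists_card_eq_ball_meet n.+1 s a_neq_b t.
  by exists x1, x2; split=> //; apply/eqP.
by move=> x1 x2 /eqP size1 /eqP size2; exact: card_le_ball_meet.
Qed.
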